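(* Let $N=(P_N,T_N,F_N,I_N,O_N)$ and $M=(P_M,T_M,F_M,I_M,O_M)$ be pWF nets with disjoint node sets, both sub-sound. Then for every place $p\in P_N$, the net $N\otimes_p M$ is sub-sound.
   Context: Petri nets and markings. A Petri net is a triple $(P,T,F)$ with $P$ a finite set of places, $T$ a finite set of transitions, $P\cap T=\emptyset$, and $F\subseteq (P\times T)\cup(T\times P)$. For a node $x$, $\bullet x=\{y\mid (y,x)\in F\}$, $x\bullet=\{y\mid (x,y)\in F\}$. A marking is a multiset over $P$ (a function $P\to\mathbb N$); sets of places are identified with bags of multiplicity one, $+,-,\le$ are pointwise, and $k.m$ is the sum of $k$ copies of $m$. Transition $t$ is enabled at $m$ iff $\bullet t\le m$, firing gives $m-\bullet t+t\bullet$, and $m\xrightarrow{*}m'$ denotes reachability by a finite (possibly empty) firing sequence. A pWF net is $(P,T,F,I,O)$ with $(P,T,F)$ a Petri net, $I,O\subseteq P$ non-empty (input/output places), every node reachable by a directed path from some node of $I$, and some node of $O$ reachable from every node; input places may have incoming edges and output places outgoing edges. Sub-soundness. A pWF net is sub-sound if for all integers $k\ge k'\ge 0$ and every marking $m'$: if $k.I\xrightarrow{*}m'+k'.O$ then $m'\xrightarrow{*}(k-k').O$. Place substitution. For WF nets $N=(P,T,F,I,O)$ and a pWF net $M=(P',T',F',I',O')$ with disjoint node sets and $p\in P$, $N\otimes_p M$ is obtained from $N$ by deleting $p$ and all edges incident to $p$, adding all nodes and edges of $M$, adding an edge $(t,p')$ for each $t\in\bullet_N p$ and $p'\in I'$,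 and an edge $(p',t)$ for each $p'\in O'$ and $t\in p\bullet_N$; its input set is $(I\setminus\{p\})\cup I'$ if $p\in I$ and $I$ otherwise, and its output set is $(O\setminus\{p\})\cup O'$ if $p\in O$ and $O$ otherwise. *)

From HB Require Import structures.
From mathcomp Require Import all_boot.
Set Implicit Arguments. Unset Strict Implicit. Unset Printing Implicit Defensive.

(* Places and transitions are the elements of two finite types P and T, so
   P ∩ T = ∅ holds by construction.  The flow relation F is given by
   pre t q  <-> (q,t) ∈ F   and   post t q <-> (t,q) ∈ F. *)
Record net (P T : finType) := Net {
  pre  : T -> P -> bool;
  post : T -> P -> bool;
  inp  : {set P};
  outp : {set P}
}.

Section Nets.
Variables (P T : finType) (N : net P T).

Definition flow : rel (P + T) := fun x y =>
  match x, y with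
  | inl q, inr t => pre N t q
  | inr t, inl q => post N t q
  | _, _ => false
  end.

Definition pWF : Prop :=
  [/\ inp N != set0, outp N != set0,
      (forall x : P + T, exists2 i, i \in inp N & connect flow (inl i) x) &
      (forall x : P + T, exists2 o, o \in outp N & connect flow x (inl o))].

Definition marking := {ffun P -> nat}.

Definition setm (k : nat) (A : {set P}) : marking := [ffun q => k * (q \in A)].
Definition addm (m1 m2 : marking) : marking := [ffun q => m1 q + m2 q].

Definition enabled (t : T) (m : marking) : bool :=
  [forall q, (pre N t q : nat) <= m q].
Definition fire (t : T) (m : marking) : marking :=
  [ffun q => m q - pre N t q + post N t q].

Inductive reach : marking -> marking -> Prop :=
  | reach_refl m : reach m m
  | reach_step m t m' : enabled t m -> reach (fire t m) m' -> reach m m'.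

Definition subsound : Prop :=
  forall (k k' : nat) (m' : marking), k' <= k ->
    reach (setm k (inp N)) (addm m' (setm k' (outp N))) ->
    reach m' (setm (k - k') (outp N)).

End Nets.

(* Place substitution N ⊗_p M.  Node sets are made disjoint by taking sums:
   places ({x : PN | x != p} + PM), transitions (TN + TM). *)
Section Subst.
Variables (PN TN PM TM : finType) (N : net PN TN) (p : PN) (M : net PM TM).

Definition splace := ({x : PN | x != p} + PM)%type.
Definition strans := (TN + TM)%type.

Definition spre (t : strans) (q : splace) : bool :=
  match t, q with
  | inl tn, inl qn => pre N tn (val qn)
  | inr tm, inr qm => pre M tm qm
  | inl tn, inr qm => pre N tn p && (qm \in outp M)
  | inr _, inl _ => false
  end.

Definition spost (t : strans) (q : splace) : bool :=
  match t, q with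
  | inl tn, inl qn => post N tn (val qn)
  | inr tm, inr qm => post M tm qm
  | inl tn, inr qm => post N tn p && (qm \in inp M)
  | inr _, inl _ => false
  end.

Definition sinp : {set splace} :=
  [set q : splace | match q with
                    | inl qn => val qn \in inp N
                    | inr qm => (p \in inp N) && (qm \in inp M)
                    end].

Definition soutp : {set splace} :=
  [set q : splace | match q with
                    | inl qn => val qn \in outp N
                    | inr qm => (p \in outp N) && (qm \in outp M)
                    end].

Definition subst_net : net splace strans := Net spre spost sinp soutp.

End Subst.

From HB Require Import structures.
From mathcomp Require Import all_boot zify.
Set Implicit Arguments. Unset Strict Implicit. Unset Printing Implicit Defensive.

(* A run of N (x)_p M from k.I is tracked by two runs: one of N and one
   of M.  Let a be the number of tokens that have entered M (initially, or
   produced by an N-transition into p) and c the number taken out of O_M by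
   N-transitions consuming p.  The invariant [tracked] says that c <= a, that
   N reaches the N-part of the marking with a - c tokens on p, and that M
   reaches from a.I_M the M-part plus c.O_M.  Sub-soundness of M bounds c by
   a ([subsound_output_bound]), which is what keeps the invariant alive when
   an N-transition consumes p.  At a marking m' + k'.O, sub-soundness of M
   first empties the M-part into tokens on O_M, sub-soundness of N then
   completes the N-run, and this N-run is replayed in the composite net with
   every token on p represented by a token on each place of O_M, each visit of
   p being simulated by a run I_M ->* O_M of M ([reach_glue_N]). *)

Section Reachability.
Variables (P T : finType) (N : net P T).

Lemma reach_trans (m1 m2 m3 : marking P) :
  reach N m1 m2 -> reach N m2 m3 -> reach N m1 m3.
Proof. by elim=> [//|m t m' en _ IH] H; apply: reach_step en _; apply: IH. Qed.

Lemma enabled_addm t (m x : marking P) :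
  enabled N t m -> enabled N t (addm m x).
Proof. by move/forallP=> en; apply/forallP=> q; rewrite ffunE; have := en q; lia. Qed.

Lemma fire_addm t (m x : marking P) : enabled N t m ->
  fire N t (addm m x) = addm (fire N t m) x.
Proof. by move/forallP=> en; apply/ffunP=> q; rewrite !ffunE; have := en q; lia. Qed.

Lemma reach_addm (m m' x : marking P) :
  reach N m m' -> reach N (addm m x) (addm m' x).
Proof.
elim=> [m0|m0 t m1 en _ IH]; first exact: reach_refl.
by apply: reach_step (enabled_addm x en) _; rewrite fire_addm.
Qed.

Lemma reach_empty (m m' : marking P) :
  (forall t, exists q, post N t q) -> reach N m m' ->
  (forall q, m' q = 0) -> forall q, m q = 0.
Proof.
move=> has_post; elim=> [//|m0 t m1 _ _ IH] empty_m'.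
have := IH empty_m'; case: (has_post t) => q post_q /(_ q).
by rewrite ffunE post_q; lia.
Qed.

(* In a pWF net every transition has an output place, since some output
   place is reachable from it. *)
Lemma pWF_has_post : pWF N -> forall t, exists q, post N t q.
Proof.
case=> _ _ _ to_out t; case: (to_out (inr t)) => o _ /connectP [[|y s]] //=.
by case/andP; case: y => [q|t'] //= post_q _ _; exists q.
Qed.

Lemma subsound_output_bound a c (m : marking P) : pWF N -> subsound N ->
  reach N (setm a (inp N)) (addm m (setm c (outp N))) -> c <= a.
Proof.
move=> wf sound run; rewrite leqNgt; apply/negP=> lt_ac.
have [o out_o] : exists o, o \in outp N by apply/set0Pn; case: wf.
set extra := addm m (setm (c - a) (outp N)).
have split_out : addm m (setm c (outp N)) = addm extra (setm a (outp N)).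
  by apply/ffunP=> q; rewrite !ffunE; lia.
rewrite split_out in run.
have empty_extra : forall q, extra q = 0.
  apply: reach_empty (pWF_has_post wf) (sound a a extra (leqnn a) run) _.
  by move=> q; rewrite ffunE subnn.
by have := empty_extra o; rewrite /extra !ffunE out_o; lia.
Qed.

Lemma subsound_unit_run :
  subsound N -> reach N (setm 1 (inp N)) (setm 1 (outp N)).
Proof.
move=> sound; have := sound 1 0 (setm 1 (inp N)) isT.
have -> : addm (setm 1 (inp N)) (setm 0 (outp N)) = setm 1 (inp N).
  by apply/ffunP=> q; rewrite !ffunE; lia.
by apply; apply: reach_refl.
Qed.

End Reachability.

Section Substitution.
Variables (PN TN PM TM : finType) (N : net PN TN) (M : net PM TM) (p : PN).
Local Notation S := (subst_net N p M).
Local Notation SP := (splace PM p).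

Definition glue (n : marking PN) (m : marking PM) : marking SP :=
  [ffun q => match q with inl qn => n (val qn) | inr qm => m qm end].

Definition projN (s : marking SP) (j : nat) : marking PN :=
  [ffun q => match (insub q : option {x : PN | x != p}) with
             | Some qn => s (inl qn) | None => j end].

Definition projM (s : marking SP) : marking PM := [ffun q => s (inr q)].

Lemma projN_p s j : projN s j p = j.
Proof. by rewrite ffunE insubF ?eqxx. Qed.

Lemma glue_proj s j : glue (projN s j) (projM s) = s.
Proof. by apply/ffunP=> -[qn|qm]; rewrite !ffunE ?valK. Qed.

Lemma reach_glue_M n (m m' : marking PM) :
  reach M m m' -> reach S (glue n m) (glue n m').
Proof.
elim=> [m0|m0 t m1 en _ IH]; first exact: reach_refl.
apply: (@reach_step _ _ S _ (inr t)).
  by apply/forallP=> -[qn|qm]; rewrite ffunE //=; move/forallP: en; apply.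
suff -> : fire S (inr t) (glue n m0) = glue n (fire M t m0) by [].
by apply/ffunP=> -[qn|qm]; rewrite !ffunE /= ?subn0 ?addn0.
Qed.

(* Runs of N are runs of the composite net when each token on p is
   represented by the marking O_M; producing a token on p yields I_M, which
   M turns into O_M. *)
Lemma reach_glue_N (n n' : marking PN) :
  reach M (setm 1 (inp M)) (setm 1 (outp M)) -> reach N n n' ->
  reach S (glue n (setm (n p) (outp M))) (glue n' (setm (n' p) (outp M))).
Proof.
move=> unit_run; elim=> [n0|n0 t n1 en _ IH]; first exact: reach_refl.
have /forallP en_q := en.
apply: (@reach_step _ _ S _ (inl t)).
  apply/forallP=> -[qn|qm]; rewrite !ffunE /=; first exact: en_q.
  by have := en_q p; case: (pre N t p); case: (qm \in outp M) => /=; lia.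
apply: reach_trans IH.
have -> : fire S (inl t) (glue n0 (setm (n0 p) (outp M))) =
  glue (fire N t n0) (addm (setm (post N t p) (inp M))
                           (setm (n0 p - pre N t p) (outp M))).
  apply/ffunP=> -[qn|qm]; rewrite !ffunE //=.
  have := en_q p; case: (pre N t p); case: (post N t p);
    case: (qm \in outp M); case: (qm \in inp M) => /=; lia.
apply: reach_glue_M; rewrite ffunE.
have -> : setm (n0 p - pre N t p + post N t p) (outp M) =
          addm (setm (post N t p) (outp M)) (setm (n0 p - pre N t p) (outp M)).
  by apply/ffunP=> q; rewrite !ffunE; lia.
apply: reach_addm; case: (post N t p) => //.
have -> : setm false (inp M) = setm false (outp M).
  by apply/ffunP=> q; rewrite !ffunE.
exact: reach_refl.
Qed.

(* Completion of a composite marking s: M empties the M-part of s into j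
   tokens on O_M, which then stand for j tokens on p in a run of N. *)
Lemma reach_glue s j (n' : marking PN) :
  reach M (setm 1 (inp M)) (setm 1 (outp M)) ->
  reach M (projM s) (setm j (outp M)) -> reach N (projN s j) n' ->
  reach S s (glue n' (setm (n' p) (outp M))).
Proof.
move=> unit_run runM runN; rewrite -(glue_proj s j).
apply: reach_trans (reach_glue_M (projN s j) runM) _.
by have := reach_glue_N unit_run runN; rewrite projN_p.
Qed.

(* The invariant of composite runs started from k.I: a tokens have entered
   M and c have left O_M. *)
Definition tracked k (s : marking SP) a c :=
  [/\ c <= a, reach N (setm k (inp N)) (projN s (a - c)) &
      reach M (setm a (inp M)) (addm (projM s) (setm c (outp M)))].

Hypotheses (wfM : pWF M) (soundM : subsound M).

Lemma tracked_init k : tracked k (setm k (sinp N p M)) (k * (p \in inp N)) 0.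
Proof.
split=> //.
  suff -> : projN (setm k (sinp N p M)) (k * (p \in inp N) - 0) = setm k (inp N).
    exact: reach_refl.
  apply/ffunP=> q; rewrite !ffunE; case: insubP => [qn _ <-|].
    by rewrite ffunE inE.
  by move/negPn/eqP=> ->; rewrite subn0.
suff -> : addm (projM (setm k (sinp N p M))) (setm 0 (outp M)) =
          setm (k * (p \in inp N)) (inp M) by exact: reach_refl.
apply/ffunP=> q; rewrite !ffunE inE.
by case: (p \in inp N); case: (q \in inp M) => /=; lia.
Qed.

Lemma tracked_fire_M k s a c t : enabled S (inr t) s ->
  tracked k s a c -> tracked k (fire S (inr t) s) a c.
Proof.
move=> /forallP en [le_ca runN runM]; split=> //.
  suff -> : projN (fire S (inr t) s) (a - c) = projN s (a - c) by [].
  apply/ffunP=> q; rewrite !ffunE; case: insubP => [qn _ _|_] //.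
  by rewrite ffunE /= subn0 addn0.
have enM : enabled M t (projM s).
  by apply/forallP=> q; rewrite ffunE; apply: (en (inr q)).
have -> : projM (fire S (inr t) s) = fire M t (projM s).
  by apply/ffunP=> q; rewrite !ffunE.
apply: reach_trans runM _; apply: reach_step (enabled_addm _ enM) _.
by rewrite fire_addm //; apply: reach_refl.
Qed.

(* An N-transition consuming p takes a token from each place of O_M, so the
   M-run would mark (c + 1).O_M; hence c + 1 <= a by sub-soundness of M. *)
Lemma consume_bound k s a c t : enabled S (inl t) s ->
  tracked k s a c -> c + pre N t p <= a.
Proof.
move=> /forallP en [le_ca _ runM].
case pre_p: (pre N t p); last by rewrite addn0.
set r : marking PM := [ffun q => projM s q - (q \in outp M)].
have shift : addm (projM s) (setm c (outp M)) = addm r (setm (c + 1) (outp M)).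
  apply/ffunP=> q; rewrite !ffunE; have := en (inr q); rewrite /= pre_p /=.
  by case: (q \in outp M) => /=; lia.
by rewrite shift in runM; apply: subsound_output_bound runM.
Qed.

(* Firing a transition t of N: the N-run is extended by t, and the M-run by
   the post N t p fresh copies of I_M; c grows by pre N t p. *)
Lemma tracked_fire_N k s a c t : enabled S (inl t) s -> tracked k s a c ->
  tracked k (fire S (inl t) s) (a + post N t p) (c + pre N t p).
Proof.
move=> en tr; have bound := consume_bound en tr.
case: tr => le_ca runN runM; move/forallP: en => en.
set b := pre N t p; set d := post N t p.
split; first lia.
- apply: reach_trans runN _.
  have enN : enabled N t (projN s (a - c)).
    apply/forallP=> q; rewrite ffunE; case: insubP => [qn _ <-|].
      exact: (en (inl qn)).
    by move/negPn/eqP=> ->; rewrite -/b; lia.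
  apply: reach_step enN _.
  suff -> : fire N t (projN s (a - c)) = projN (fire S (inl t) s) (a + d - (c + b)).
    exact: reach_refl.
  apply/ffunP=> q; rewrite !ffunE; case: insubP => [qn _ <-|].
    by rewrite !ffunE.
  by move/negPn/eqP=> ->; rewrite -/b -/d; lia.
- have := reach_addm (setm d (inp M)) runM.
  have -> : addm (setm a (inp M)) (setm d (inp M)) = setm (a + d) (inp M).
    by apply/ffunP=> q; rewrite !ffunE; lia.
  suff -> : addm (addm (projM s) (setm c (outp M))) (setm d (inp M)) =
            addm (projM (fire S (inl t) s)) (setm (c + b) (outp M)) by [].
  apply/ffunP=> q; rewrite !ffunE /= -/b -/d.
  have := en (inr q); rewrite /= -/b.
  by case: (q \in outp M); case: (q \in inp M); rewrite /= ?andbT ?andbF; lia.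
Qed.

Lemma tracked_reach k s s' a c :
  reach S s s' -> tracked k s a c -> exists a' c', tracked k s' a' c'.
Proof.
move=> run; elim: run a c => [s0|s0 [t|t] s1 en _ IH] a c tr.
- by exists a, c.
- exact: IH (tracked_fire_N en tr).
- exact: IH (tracked_fire_M en tr).
Qed.

Hypothesis soundN : subsound N.

(* At a tracked marking m' + k'.O, sub-soundness of M and then of N complete
   the composite run to (k - k').O. *)
Lemma tracked_final k k' (m' : marking SP) a c : k' <= k ->
  tracked k (addm m' (setm k' (soutp N p M))) a c ->
  reach S m' (setm (k - k') (soutp N p M)).
Proof.
move=> le_k [_ runN runM].
set e := k' * (p \in outp N); set s := addm m' _ in runN runM.
have outM : addm (projM s) (setm c (outp M)) =
            addm (projM m') (setm (c + e) (outp M)).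
  apply/ffunP=> q; rewrite !ffunE inE /e.
  by case: (p \in outp N); case: (q \in outp M) => /=; lia.
rewrite outM in runM; have le_cea := subsound_output_bound wfM soundM runM.
have outN : projN s (a - c) = addm (projN m' (a - (c + e))) (setm k' (outp N)).
  apply/ffunP=> q; rewrite !ffunE; case: insubP => [qn _ <-|].
    by rewrite !ffunE inE.
  by move/negPn/eqP=> ->; move: le_cea; rewrite /e; lia.
rewrite outN in runN.
have := reach_glue (subsound_unit_run soundM) (soundM le_cea runM)
                   (soundN le_k runN).
suff -> : glue (setm (k - k') (outp N)) (setm (setm (k - k') (outp N) p) (outp M))
          = setm (k - k') (soutp N p M) by [].
apply/ffunP=> -[qn|qm]; rewrite !ffunE inE //=.
by case: (p \in outp N); case: (qm \in outp M) => /=; lia.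
Qed.

End Substitution.

Unset Implicit Arguments.

Theorem mainTheorem8 (PN TN PM TM : finType) (N : net PN TN) (M : net PM TM)
    (p : PN) :
  pWF N -> pWF M -> subsound N -> subsound M ->
  subsound (subst_net N p M).
Proof.
move=> _ wfM soundN soundM k k' m' le_k run.
have [a [c tr]] := tracked_reach wfM soundM run (tracked_init N M p k).
by apply: (tracked_final wfM soundM soundN le_k); apply: tr.
Qed.
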